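(* Let $G$ be a finite group of order $n$ and let $P_G := \prod_{x \in G} o(x)$. Then $P_G \leq P_{C_n}$, with equality if and only if $G$ is cyclic.
   Context: $o(x)$ denotes the order of the element $x$; $C_n$ denotes the cyclic group of order $n$, and $P_{C_n} = \prod_{x\in C_n} o(x)$. *)

From mathcomp Require Import all_boot all_fingroup all_solvable.
Set Implicit Arguments. Unset Strict Implicit. Unset Printing Implicit Defensive.

Definition prod_orders (gT : finGroupType) (G : {set gT}) : nat :=
  \prod_(x in G) #[x]%g.

From mathcomp Require Import all_boot all_fingroup all_solvable.
From mathcomp Require Import ssralg zify.

(* The p-adic valuation of P_G is the sum, over k >= 1, of the number of
   elements of G whose order is divisible by p^k.  The remaining elements are
   the solutions of x^m = 1 for m = |G|_p' * p^(k-1); by Frobenius' theorem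
   there are at least m of them, and exactly m when G is cyclic.  Hence P_G
   divides P_{C_n}.
   If P_G = P_{C_n}, then for each prime p with p^b exactly dividing n, exactly
   n - n/p elements have order divisible by p^b.  Each of them centralises the
   Sylow subgroup generated by its p-part, and counting them Sylow subgroup by
   Sylow subgroup forces the Sylow p-subgroups P to be cyclic with
   N_G(P) = C_G(P).  Burnside's transfer argument then makes G' a p'-group for
   every p, so G is abelian with cyclic Sylow subgroups, hence cyclic. *)

Set Implicit Arguments. Unset Strict Implicit. Unset Printing Implicit Defensive.

Definition pfactor_elts (gT : finGroupType) (G : {set gT}) p k :=
  [set x in G | p ^ k %| #[x]%g].

Lemma dvdn_partC_expn_pred p n d k : prime p -> 0 < n -> d %| n -> 0 < k ->
  (d %| n`_p^' * p ^ k.-1) = ~~ (p ^ k %| d).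
Proof.
move=> p_pr n_gt0 dvd_dn k_gt0; have d_gt0 := dvdn_gt0 n_gt0 dvd_dn.
rewrite -{1}(partnC p d_gt0) Gauss_dvd ?coprime_partC //.
rewrite (dvdn_mulr _ (partn_dvd _ n_gt0 dvd_dn)) andbT.
rewrite Gauss_dvdr ?coprime_partC // p_part dvdn_Pexp2l ?prime_gt1 //.
by rewrite pfactor_dvdn //; lia.
Qed.

Lemma partC_expn_pred_dvdn p n k : prime p -> 0 < n -> p ^ k %| n ->
  n`_p^' * p ^ k.-1 %| n.
Proof.
move=> p_pr n_gt0 pk_dvd_n; rewrite -{2}(partnC p n_gt0) mulnC dvdn_mul //.
rewrite p_part dvdn_Pexp2l ?prime_gt1 // -pfactor_dvdn //.
by apply: dvdn_trans pk_dvd_n; rewrite dvdn_exp2l ?leq_pred.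
Qed.

Lemma partC_expn_logn_pred p n : prime p -> p %| n -> 0 < n ->
  n`_p^' * p ^ (logn p n).-1 = n %/ p.
Proof.
move=> p_pr p_dvd_n n_gt0.
have b_gt0 : 0 < logn p n by rewrite logn_gt0 mem_primes p_pr n_gt0.
rewrite -[in RHS](partnC p n_gt0) p_part -(prednK b_gt0) expnSr mulnAC.
by rewrite mulnK ?prime_gt0 // mulnC.
Qed.

Lemma logn_count_dvd_widen p d n : prime p -> 0 < d -> d <= n ->
  logn p d = \sum_(1 <= k < n) (p ^ k %| d).
Proof.
move=> p_pr d_gt0 le_dn; rewrite (logn_count_dvd _ p_pr) (big_nat_widen _ _ n) //.
rewrite big_mkcond /=; apply: eq_bigr => k _; case: ifP => // /negbT.
rewrite -leqNgt => le_dk; suff -> : (p ^ k %| d) = false by [].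
apply/negbTE/negP => /(dvdn_leq d_gt0).
by rewrite leqNgt (leq_ltn_trans le_dk (ltn_expl k (prime_gt1 p_pr))).
Qed.

Lemma logn_prod I (r : seq I) (P : pred I) (F : I -> nat) p :
  (forall i, P i -> 0 < F i) ->
  logn p (\prod_(i <- r | P i) F i) = \sum_(i <- r | P i) logn p (F i).
Proof.
move=> F_gt0; elim: r => [|i r IHr]; first by rewrite !big_nil logn1.
rewrite !big_cons; case: ifP => // Pi.
by rewrite lognM ?F_gt0 ?prodn_cond_gt0 ?IHr.
Qed.

Lemma pfactor_logn_ndvd_divn p n : prime p -> p %| n -> 0 < n ->
  ~~ (p ^ logn p n %| n %/ p).
Proof.
move=> p_pr p_dvd_n n_gt0.
have b_gt0 : 0 < logn p n by rewrite logn_gt0 mem_primes p_pr n_gt0.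
have np_gt0 : 0 < n %/ p by rewrite (divn_gt0 _ (prime_gt0 p_pr)) (dvdn_leq n_gt0 p_dvd_n).
rewrite (pfactor_dvdn _ p_pr np_gt0) (logn_div _ p_dvd_n) (logn_prime _ p_pr) eqxx.
by rewrite subn1 -ltnNge ltn_predL.
Qed.

Lemma leq_card_bigcup (T I : finType) (P : pred I) (A : I -> {set T}) :
  #|\bigcup_(i | P i) A i| <= \sum_(i | P i) #|A i|.
Proof.
elim/big_ind2: _ => [|B m C k le_Bm le_Ck|i _]; first by rewrite cards0.
  by apply: leq_trans (leq_add le_Bm le_Ck); apply: leq_card_setU.
exact: leqnn.
Qed.

Lemma leq_Ldiv (gT : finGroupType) (G : {group gT}) m :
  m %| #|G| -> m <= #|'Ldiv_m(G)%g|.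
Proof.
move=> m_dvd_G; apply: dvdn_leq (Frobenius_Ldiv m_dvd_G).
by apply/card_gt0P; exists 1%g; rewrite !inE group1 expg1n eqxx.
Qed.

Lemma card_Ldiv_cyclic_dvdn (gT : finGroupType) (C : {group gT}) m :
  cyclic C -> #|'Ldiv_m(C)%g| %| m.
Proof.
move=> cycC; have Ldiv_group := group_Ldiv m (cyclic_abelian cycC).
pose L := Group Ldiv_group.
have -> : 'Ldiv_m(C)%g = L by [].
rewrite -exponent_cyclic; last by apply: cyclicS cycC; apply: subsetIl.
by rewrite -sub_LdivT subsetIr.
Qed.

Lemma card_setD_Ldiv (gT : finGroupType) (H : {group gT}) m :
  m %| #|H| -> #|H :\: 'Ldiv_m()%g| <= #|H| - m.
Proof.
move=> m_dvd_H; rewrite -(cardsID 'Ldiv_m()%g H) -addnBAC ?leq_addl //.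
exact: leq_Ldiv.
Qed.

Lemma cent_cycle_constt (gT : finGroupType) (pi : nat_pred) (x : gT) :
  x \in 'C(<[x.`_pi]>)%g.
Proof.
rewrite cent_cycle; apply/cent1P; apply: commute_sym; apply/cent1P.
by rewrite -cent_cycle (subsetP (cycle_abelian x)) ?cycle_constt.
Qed.

Lemma prod_orders_gt0 (gT : finGroupType) (G : {group gT}) : 0 < prod_orders G.
Proof. by apply: prodn_cond_gt0 => x _; apply: order_gt0. Qed.

Section PfactorElts.

Variables (gT : finGroupType) (G : {group gT}) (p : nat).
Hypothesis p_pr : prime p.

Lemma card_pfactor_elts_Ldiv k : 0 < k ->
  #|pfactor_elts G p k| + #|'Ldiv_(#|G|`_p^' * p ^ k.-1)(G)%g| = #|G|.
Proof.
move=> k_gt0; rewrite -[in RHS](cardsID ('Ldiv_(#|G|`_p^' * p ^ k.-1)())%g G).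
rewrite addnC; congr (_ + _); apply: eq_card => x; rewrite !inE.
case Gx: (x \in G); rewrite ?andbF ?andbT //.
by rewrite -order_dvdn dvdn_partC_expn_pred ?negbK ?cardG_gt0 ?order_dvdG.
Qed.

Lemma pfactor_elts0 k : ~~ (p ^ k %| #|G|) -> pfactor_elts G p k = set0.
Proof.
move=> pk_ndvd_G; apply/setP => x; rewrite !inE; apply/andP => -[Gx pk_dvd_x].
by case/negP: pk_ndvd_G; apply: dvdn_trans pk_dvd_x (order_dvdG Gx).
Qed.

Lemma card_pfactor_elts_cyclic k : cyclic G -> 0 < k -> p ^ k %| #|G| ->
  #|pfactor_elts G p k| + #|G|`_p^' * p ^ k.-1 = #|G|.
Proof.
move=> cycG k_gt0 pk_dvd_G.
have m_dvd_G := partC_expn_pred_dvdn p_pr (cardG_gt0 G) pk_dvd_G.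
rewrite -[in RHS](card_pfactor_elts_Ldiv k_gt0); congr (_ + _); apply/eqP.
rewrite eqn_leq leq_Ldiv //= dvdn_leq ?card_Ldiv_cyclic_dvdn //.
by rewrite muln_gt0 part_gt0 expn_gt0 prime_gt0.
Qed.

Lemma card_pfactor_elts_top_cyclic : cyclic G -> p %| #|G| ->
  #|pfactor_elts G p (logn p #|G|)| + #|G| %/ p = #|G|.
Proof.
move=> cycG p_dvd_G; have G_gt0 := cardG_gt0 G.
rewrite -partC_expn_logn_pred // card_pfactor_elts_cyclic ?pfactor_dvdnn //.
by rewrite logn_gt0 mem_primes p_pr G_gt0.
Qed.

Lemma logn_prod_orders :
  logn p (prod_orders G) = \sum_(1 <= k < #|G|) #|pfactor_elts G p k|.
Proof.
rewrite logn_prod => [|x _]; last exact: order_gt0.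
rewrite (eq_bigr (fun x => \sum_(1 <= k < #|G|) (p ^ k %| #[x]%g))) => [|x Gx].
  rewrite exchange_big /=; apply: eq_bigr => k _.
  by rewrite -sum1dep_card big_mkcondr; apply: eq_bigr => x _; case: (_ %| _).
apply: logn_count_dvd_widen => //.
exact: dvdn_leq (cardG_gt0 G) (order_dvdG Gx).
Qed.

End PfactorElts.

Section CompareWithCyclic.

Variables (gT cT : finGroupType) (G : {group gT}) (C : {group cT}).
Hypotheses (cycC : cyclic C) (oC : #|C| = #|G|).

Lemma card_pfactor_elts_le_cyclic p k : prime p -> 0 < k ->
  #|pfactor_elts G p k| <= #|pfactor_elts C p k|.
Proof.
move=> p_pr k_gt0; have [pk_dvd_G|] := boolP (p ^ k %| #|G|); last first.
  by move/pfactor_elts0 => ->; rewrite cards0.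
have countG := card_pfactor_elts_Ldiv G p_pr k_gt0.
have countC := card_pfactor_elts_cyclic p_pr cycC k_gt0 (etrans (congr1 _ oC) pk_dvd_G).
have := leq_Ldiv (partC_expn_pred_dvdn p_pr (cardG_gt0 G) pk_dvd_G).
rewrite oC in countC; lia.
Qed.

Lemma logn_prod_orders_le_cyclic p :
  logn p (prod_orders G) <= logn p (prod_orders C).
Proof.
have [p_pr|p_npr] := boolP (prime p); last by rewrite /logn (negbTE p_npr).
rewrite !logn_prod_orders // oC big_nat_cond [leqRHS]big_nat_cond.
apply: leq_sum => k /andP[/andP[k_gt0 _] _].
exact: card_pfactor_elts_le_cyclic.
Qed.

Lemma prod_orders_dvd_cyclic : prod_orders G %| prod_orders C.
Proof.
apply/dvdn_partP => [|p]; first exact: prod_orders_gt0.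
rewrite mem_primes => /and3P[p_pr _ _].
by rewrite p_part pfactor_dvdn ?prod_orders_gt0 ?logn_prod_orders_le_cyclic.
Qed.

Lemma card_pfactor_elts_eq_cyclic p k :
  prod_orders G = prod_orders C -> prime p -> 0 < k < #|G| ->
  #|pfactor_elts G p k| = #|pfactor_elts C p k|.
Proof.
move=> eqGC p_pr k_range.
have le_GC i : 1 <= i < #|G| -> #|pfactor_elts G p i| <= #|pfactor_elts C p i|.
  by case/andP=> i_gt0 _; apply: card_pfactor_elts_le_cyclic.
have := congr1 (logn p) eqGC; rewrite !logn_prod_orders // oC => eq_sums.
have : \sum_(1 <= i < #|G|) (#|pfactor_elts C p i| - #|pfactor_elts G p i|) == 0.
  rewrite big_nat_cond sumnB => [|i /andP[/le_GC //]].
  by rewrite -!big_nat_cond eq_sums subnn.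
rewrite sum_nat_seq_eq0 => /allP/(_ k); rewrite mem_index_iota k_range /=.
by move/(_ isT); rewrite subn_eq0 => le_CG; apply/eqP; rewrite eqn_leq le_CG le_GC.
Qed.

Lemma card_pfactor_elts_top_eq_cyclic p :
  prod_orders G = prod_orders C -> prime p -> p %| #|G| ->
  #|pfactor_elts G p (logn p #|G|)| + #|G| %/ p = #|G|.
Proof.
move=> eqGC p_pr p_dvd_G; have G_gt0 := cardG_gt0 G.
have b_gt0 : 0 < logn p #|G| by rewrite logn_gt0 mem_primes p_pr G_gt0.
have b_lt_G : logn p #|G| < #|G|.
  exact: leq_trans (ltn_expl _ (prime_gt1 p_pr)) (dvdn_leq G_gt0 (pfactor_dvdnn p _)).
rewrite card_pfactor_elts_eq_cyclic ?b_gt0 // -oC.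
by rewrite card_pfactor_elts_top_cyclic ?oC.
Qed.

End CompareWithCyclic.

Section SylowCount.

Local Open Scope group_scope.

Variables (gT : finGroupType) (p : nat).
Hypothesis p_pr : prime p.

Variable G : {group gT}.

Lemma Sylow_cycle_constt x :
  x \in G -> (p ^ logn p #|G| %| #[x])%N -> p.-Sylow(G) <[x.`_p]>.
Proof.
move=> Gx pb_dvd_x; have sxG : <[x]> \subset G by rewrite cycle_subG.
rewrite pHallE cycle_subG (subsetP sxG _ (cycle_constt p x)) /= [#|_|]order_constt.
rewrite !p_part; apply/eqP; congr (p ^ _)%N; apply/eqP.
rewrite eqn_leq dvdn_leq_log ?order_gt0 ?order_dvdG //=.
by rewrite -pfactor_dvdn.
Qed.

Lemma cyclic_Sylow_of_pfactor_elt x (S : {group gT}) :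
  x \in G -> (p ^ logn p #|G| %| #[x])%N -> p.-Sylow(G) S -> cyclic S.
Proof.
move=> Gx pb_dvd_x sylS.
have [g Gg ->] := Sylow_trans (Sylow_cycle_constt Gx pb_dvd_x) sylS.
by rewrite cyclicJ cycle_cyclic.
Qed.

Variable P : {group gT}.
Hypotheses (p_dvd_G : (p %| #|G|)%N) (sylP : p.-Sylow(G) P).

Let n := #|G|.
Let b := logn p n.
Let c := #|'C_G(P)|.

Lemma cyclic_Sylow_of_pfactor_elts : pfactor_elts G p b != set0 -> cyclic P.
Proof.
case/set0Pn=> x; rewrite inE => /andP[Gx pb_dvd_x].
exact: cyclic_Sylow_of_pfactor_elt Gx pb_dvd_x sylP.
Qed.

Lemma dvdn_card_cent_abelian_Sylow : abelian P -> (p %| c)%N.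
Proof.
move=> abP; have sPC : P \subset 'C_G(P) by rewrite subsetI (pHall_sub sylP).
apply: dvdn_trans (cardSg sPC); rewrite (card_Hall sylP) p_part.
by rewrite -{1}(expn1 p) dvdn_exp2l // logn_gt0 mem_primes p_pr cardG_gt0.
Qed.

Lemma card_pfactor_elts_top_le : pfactor_elts G p b != set0 ->
  (#|pfactor_elts G p b| <= #|G : 'N_G(P)| * (c - c %/ p))%N.
Proof.
move=> nonempty; have cardCS (S : {group gT}) : p.-Sylow(G) S -> #|'C_G(S)| = c.
  case/(Sylow_trans sylP)=> g Gg ->.
  by rewrite centJ -{1}(conjGid Gg) -conjIg cardJg.
have p_dvd_c : (p %| c)%N.
  exact/dvdn_card_cent_abelian_Sylow/cyclic_abelian/cyclic_Sylow_of_pfactor_elts.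
have cover : pfactor_elts G p b \subset
    \bigcup_(S in 'Syl_p(G)) ('C_G(S) :\: 'Ldiv_(c %/ p)()).
  apply/subsetP=> x; rewrite inE => /andP[Gx pb_dvd_x].
  have sylS := Sylow_cycle_constt Gx pb_dvd_x.
  apply/bigcupP; exists <[x.`_p]>%G; first by rewrite inE sylS.
  rewrite !inE Gx cent_cycle_constt !andbT -order_dvdn; apply/negP=> x_dvd_cp.
  case/negP: (pfactor_logn_ndvd_divn p_pr p_dvd_G (cardG_gt0 G)).
  apply: dvdn_trans pb_dvd_x (dvdn_trans x_dvd_cp _).
  by rewrite dvdn_divRL // divnK // cardSg ?subsetIl.
apply: leq_trans (subset_leq_card cover) _; apply: leq_trans (leq_card_bigcup _ _) _.
rewrite -(card_Syl sylP) -sum_nat_const; apply: leq_sum => S; rewrite inE => sylS.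
by rewrite -(cardCS S sylS) card_setD_Ldiv // cardCS // dvdn_div.
Qed.

Hypothesis count_top : (#|pfactor_elts G p b| + n %/ p)%N = n.

Lemma pfactor_elts_top_neq0 : pfactor_elts G p b != set0.
Proof.
have np_lt_n : (n %/ p < n)%N by rewrite ltn_Pdiv ?prime_gt1 ?cardG_gt0.
by rewrite -card_gt0; lia.
Qed.

Lemma Sylow_normaliser_sub_cent : 'N_G(P) \subset 'C(P).
Proof.
have nonempty := pfactor_elts_top_neq0.
have [c' def_c] : exists c', c = (c' * p)%N.
  apply/dvdnP/dvdn_card_cent_abelian_Sylow/cyclic_abelian.
  exact: cyclic_Sylow_of_pfactor_elts nonempty.
have c'_gt0 : (0 < c')%N by move: (cardG_gt0 'C_G(P)); rewrite -/c def_c muln_gt0 => /andP[].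
have sCN : 'C_G(P) \subset 'N_G(P) := setIS G (cent_sub P).
have eqN := Lagrange sCN; have eqG := Lagrange (subsetIl G 'N(P)).
set g := #|G : 'N_G(P)| in eqG *; set h := #|'N_G(P) : 'C_G(P)| in eqN.
have g_gt0 : (0 < g)%N := indexg_gt0 _ _; have h_gt0 : (0 < h)%N := indexg_gt0 _ _.
have def_n : n = (g * h * c' * p)%N by rewrite /n -eqG -eqN -/c def_c; lia.
have := card_pfactor_elts_top_le nonempty; rewrite def_c mulnK ?prime_gt0 //.
move: count_top; rewrite def_n mulnK ?prime_gt0 // => count bound.
suff /eqP : h = 1%N by rewrite indexg_eq1 => /subset_trans->; rewrite ?subsetIr.
have p_gt1 := prime_gt1 p_pr.
apply/eqP; rewrite eqn_leq h_gt0 andbT; nia.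
Qed.

Lemma cyclic_central_Sylow_of_count : cyclic P /\ 'N_G(P) \subset 'C(P).
Proof.
split; last exact: Sylow_normaliser_sub_cent.
exact/cyclic_Sylow_of_pfactor_elts/pfactor_elts_top_neq0.
Qed.

End SylowCount.

Section CentralSylowTransfer.

Local Open Scope group_scope.

Variables (gT : finGroupType) (p : nat) (G P : {group gT}).
Hypotheses (sylP : p.-Sylow(G) P) (abP : abelian P).
Hypothesis nPG_sub_cP : 'N_G(P) \subset 'C(P).

Let sPG : P \subset G := pHall_sub sylP.

(* Burnside's fusion argument: P and P :^ y^-1 are Sylow subgroups of 'C_G[a],
   so y can be corrected by an element of 'C_G[a] into 'N_G(P). *)
Lemma Sylow_conj_fixed a y : a \in P -> y \in G -> a ^ y \in P -> a ^ y = a.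
Proof.
move=> Pa Gy Pay.
have sPCa : P \subset 'C_G[a] by rewrite subsetI sPG sub_cent1 (subsetP abP).
have sPyCa : P :^ y^-1 \subset 'C_G[a].
  rewrite subsetI !sub_conjgV conjGid // sPG /=.
  by rewrite -cent1J sub_cent1 (subsetP abP).
have sylPCa : p.-Sylow('C_G[a]) P := pHall_subl sPCa (subsetIl _ _) sylP.
have sylPyCa : p.-Sylow('C_G[a]) (P :^ y^-1).
  by apply: pHall_subl sPyCa (subsetIl _ _) _; rewrite pHallJ ?groupV.
have [c Cc defP] := Sylow_trans sylPCa sylPyCa.
have [Gc cac] : c \in G /\ a ^ c = a.
  move: Cc; rewrite inE => /andP[-> /cent1P cac].
  by split=> //; apply/conjg_fixP/commgP/commute_sym.
have Ncy : c * y \in 'N_G(P).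
  by rewrite inE groupM //=; apply/normP; rewrite conjsgM -defP conjsgKV.
have acy : a ^ (c * y) = a.
  apply/conjg_fixP/commgP/commute_sym.
  exact: (centP (subsetP nPG_sub_cP _ Ncy)).
by rewrite -{2}acy conjgM cac.
Qed.

Lemma transfer_central_Sylow (abA : abelian (idm P @* P)) g :
  g \in P -> FiniteModule.fmval (transfer G abA g) = g ^+ #|G : P|.
Proof.
move=> Pg; have Gg := subsetP sPG g Pg.
have trX := transversalP (rcosets_cycle_partition sPG Gg).
rewrite (transfer_cycle_expansion sPG abA Gg trX) FiniteModule.fmval_sum.
rewrite -(sum_index_rcosets_cycle sPG Gg trX).
rewrite (big_morph (fun n => g ^+ n) (expgD g) (expg0 g)).
apply: eq_bigr => x Xx; have Gx := subsetP (transversal_sub trX) x Xx.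
set n := #|<[g]> : P :* x|.
have Pgn : g ^+ n \in P by rewrite groupX.
have Pgnx : (g ^+ n) ^ x^-1 \in P.
  have := mulg_exp_card_rcosets P g x; rewrite -/n mem_rcoset.
  by rewrite conjgE invgK mulgA.
rewrite (Sylow_conj_fixed Pgn (groupVr Gx) Pgnx) /=.
by rewrite FiniteModule.fmodK //; apply: mem_morphim.
Qed.

Lemma der1_p'group_central_Sylow : p^'.-group G^`(1).
Proof.
have abA : abelian (idm P @* P) by rewrite morphim_idm.
have sDker : G^`(1) \subset 'ker (transfer_morphism G abA).
  rewrite gen_subG; apply/subsetP=> _ /imset2P[x y Gx Gy ->].
  apply/kerP; first by rewrite groupR.
  by rewrite morphR //; apply/eqP/commgP; apply: GRing.addrC.
have tiDP : G^`(1) :&: P = 1.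
  apply/trivgP/subsetP=> g /setIP[Dg Pg]; apply/set1P.
  have := transfer_central_Sylow abA Pg.
  rewrite (mker (subsetP sDker g Dg)) => /esym/eqP; rewrite -order_dvdn => g_dvd.
  have [_ _ p'index] := and3P sylP.
  apply/eqP; rewrite -order_eq1; apply/eqP.
  exact: pnat_1 (mem_p_elt (pHall_pgroup sylP) Pg) (pnat_dvd g_dvd p'index).
have sylD := Sylow_setI_normal (der_normal 1 G) sylP.
by rewrite /pgroup -partn_eq1 ?cardG_gt0 // -(card_Hall sylD) /= tiDP cards1.
Qed.

End CentralSylowTransfer.

Lemma cyclic_of_central_cyclic_Sylows (gT : finGroupType) (G : {group gT}) :
    (forall p (P : {group gT}), prime p -> (p %| #|G|)%N -> p.-Sylow(G) P ->
      cyclic P /\ 'N_G(P) \subset 'C(P))%g ->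
  cyclic G.
Proof.
move=> SylowG.
have abG : abelian G.
  apply/derG1P; have [//|[q q_pr q_dvd_D]] := trivgVpdiv G^`(1)%g.
  have q_dvd_G := dvdn_trans q_dvd_D (cardSg (der_sub 1 G)).
  have [Q sylQ] := Sylow_exists q G; have [cycQ nQ_sub_cQ] := SylowG q Q q_pr q_dvd_G sylQ.
  have := der1_p'group_central_Sylow sylQ (cyclic_abelian cycQ) nQ_sub_cQ.
  by rewrite /pgroup p'natE // q_dvd_D.
apply: nil_Zgroup_cyclic (abelian_nil abG).
apply/forall_inP=> Q /SylowP[q q_pr sylQ].
have [q_dvd_G|q_ndvd_G] := boolP (q %| #|G|); first by case: (SylowG q Q q_pr q_dvd_G sylQ).
suff -> : Q = 1%G by apply: cyclic1.
apply/val_inj/card_le1_trivg.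
by rewrite (card_Hall sylQ) part_p'nat // p'natE.
Qed.

Lemma prod_orders_isog (gT hT : finGroupType) (G : {group gT}) (H : {group hT}) :
  (G \isog H)%g -> prod_orders G = prod_orders H.
Proof.
case/isogP=> f injf <-; rewrite /prod_orders morphimEdom big_imset /=.
  by apply: eq_bigr => x Gx; rewrite order_injm.
by move=> x y Gx Gy; apply: (injmP injf).
Qed.

Theorem theorem1p3 (gT : finGroupType) (G : {group gT})
  (cT : finGroupType) (C : {group cT}) :
  cyclic C -> #|C| = #|G| ->
  prod_orders G <= prod_orders C /\
  (prod_orders G = prod_orders C <-> cyclic G).
Proof.
move=> cycC oC; have dvd_GC := prod_orders_dvd_cyclic cycC oC.
split; first exact: dvdn_leq (prod_orders_gt0 C) dvd_GC.
split=> [eqGC | cycG]; last first.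
  by apply: prod_orders_isog; rewrite isog_cyclic_card // cycC oC eqxx.
apply: cyclic_of_central_cyclic_Sylows => p P p_pr p_dvd_G sylP.
have count_top := card_pfactor_elts_top_eq_cyclic cycC oC eqGC p_pr p_dvd_G.
exact (cyclic_central_Sylow_of_count p_pr p_dvd_G sylP count_top).
Qed.
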